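(* Let $N\ge1$ and let $f_1,\dots,f_{2N+2}:\mathbb{R}\to\mathbb{R}$ be continuous convex functions. Let $v_1=\min(f_1,\dots,f_{N+1})$, $v_2=\min(f_{N+2},\dots,f_{2N+2})$ and $v=\max(v_1,v_2)$. Then $$\mathcal{C}_v\subseteq \Psi_v:=\Big(\bigcup_{1\le i\le 2N+2}\mathcal{C}_{f_i}\Big)\cup\Big(\bigcup_{1\le i<j\le 2N+2}\mathcal{S}_{f_i,f_j}\Big).$$ Moreover, if $v$ attains its global minimum on $\mathbb{R}$, then the minimum of $v(x)$ over the set $\{x : (x,y)\in\Psi_v,\ v(x)=y\}$ is attained and equals $\min_{x\in\mathbb{R}}v(x)$; in particular a global minimizer of $v$ is given by $$x^*_v\in\arg\min_x\{v(x): (x,y)\in\Psi_v,\ v(x)=y\}.$$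
   Context: For a continuous function $g:\mathbb{R}\to\mathbb{R}$, a critical point of $g$ is a point $(x,g(x))$ such that either $g$ is not differentiable at $x$ or $g'(x)=0$; $\mathcal{C}_g$ denotes the set of critical points of $g$. For two functions $g,h:\mathbb{R}\to\mathbb{R}$, $\mathcal{S}_{g,h}=\{(x,g(x)):x\in\mathbb{R},\ g(x)=h(x)\}$. Minima and maxima of functions are taken pointwise. *)

From Stdlib Require Import Reals Lra.
Open Scope R_scope.

Definition convex_fun (g : R -> R) : Prop :=
  forall x y t, 0 <= t <= 1 ->
    g (t * x + (1 - t) * y) <= t * g x + (1 - t) * g y.

Definition critical_pt (g : R -> R) (x y : R) : Prop :=
  y = g x /\ ((~ exists l, derivable_pt_lim g x l) \/ derivable_pt_lim g x 0).

Definition S_pt (g h : R -> R) (x y : R) : Prop :=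
  y = g x /\ g x = h x.

Fixpoint min_range (f : nat -> R -> R) (a k : nat) (x : R) : R :=
  match k with
  | O => f a x
  | S k' => Rmin (min_range f a k' x) (f (a + k)%nat x)
  end.

Definition Psi (f : nat -> R -> R) (N : nat) (x y : R) : Prop :=
  (exists i, (1 <= i <= 2 * N + 2)%nat /\ critical_pt (f i) x y) \/
  (exists i j, (1 <= i)%nat /\ (i < j)%nat /\ (j <= 2 * N + 2)%nat /\
               S_pt (f i) (f j) x y).

From Stdlib Require Import Reals Lra Lia Classical.
Open Scope R_scope.

(* Let x be a point of the graph of v.  If v1 x = v2 x, or if the minimum
   defining the larger of v1 x, v2 x is attained by two indices, then x lies on
   some S_{f_i,f_j}.  Otherwise the larger minimum is attained by a single f_k
   strictly below the other members of its block, and by continuity v = f_k on a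
   neighbourhood of x; since being critical is a local property, (x, v x) is then
   a critical point of f_k.  For the second part, a global minimizer of v is a
   critical point of v (Fermat's rule), hence lies in Psi_v. *)


Lemma continuity_pt_Rmin (g h : R -> R) x :
  continuity_pt g x -> continuity_pt h x ->
  continuity_pt (fun y => Rmin (g y) (h y)) x.
Proof.
  intros Hg Hh eps Heps.
  destruct (Hg eps Heps) as [dg [Hdg Cg]], (Hh eps Heps) as [dh [Hdh Ch]].
  exists (Rmin dg dh); split; [now apply Rmin_pos|].
  intros y [Dy Hy]; simpl in *; unfold R_dist in *.
  assert (Ey := Cg y (conj Dy (Rlt_le_trans _ _ _ Hy (Rmin_l _ _)))).
  assert (Fy := Ch y (conj Dy (Rlt_le_trans _ _ _ Hy (Rmin_r _ _)))).
  simpl in Ey, Fy; unfold R_dist in Ey, Fy.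
  apply Rabs_def2 in Ey, Fy; apply Rabs_def1;
    unfold Rmin; repeat destruct Rle_dec; lra.
Qed.

Definition near (x : R) (P : R -> Prop) : Prop :=
  exists d, 0 < d /\ forall y, Rabs (y - x) < d -> P y.

Lemma near_and x (P Q : R -> Prop) :
  near x P -> near x Q -> near x (fun y => P y /\ Q y).
Proof.
  intros [d1 [Hd1 HP]] [d2 [Hd2 HQ]].
  exists (Rmin d1 d2); split; [now apply Rmin_pos|].
  intros y Hy; split; [apply HP | apply HQ];
    eapply Rlt_le_trans; eauto; [apply Rmin_l | apply Rmin_r].
Qed.

Lemma near_mono x (P Q : R -> Prop) :
  (forall y, P y -> Q y) -> near x P -> near x Q.
Proof. intros HPQ [d [Hd HP]]; exists d; auto. Qed.

Lemma near_at x (P : R -> Prop) : near x P -> P x.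
Proof. intros [d [Hd HP]]; apply HP; rewrite Rminus_diag, Rabs_R0; exact Hd. Qed.

Lemma near_lt (g h : R -> R) x :
  continuity_pt g x -> continuity_pt h x -> g x < h x ->
  near x (fun y => g y < h y).
Proof.
  intros Hg Hh Hlt.
  destruct (continuity_pt_minus h g x Hh Hg (h x - g x)) as [d [Hd C]]; [lra|].
  exists d; split; [exact Hd|]; intros y Hy.
  destruct (Req_dec y x) as [->|Hne]; [exact Hlt|].
  specialize (C y (conj (conj I (not_eq_sym Hne)) Hy)).
  simpl in C; unfold R_dist, minus_fct in C; apply Rabs_def2 in C; lra.
Qed.

Lemma near_Rmax_l (g h : R -> R) x :
  continuity_pt g x -> continuity_pt h x -> h x < g x ->
  near x (fun y => Rmax (g y) (h y) = g y).
Proof.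
  intros Hg Hh Hlt; apply (near_mono x _ _ (fun y Hy => Rmax_left _ _ (Rlt_le _ _ Hy))).
  exact (near_lt h g x Hh Hg Hlt).
Qed.

Lemma near_Rmax_r (g h : R -> R) x :
  continuity_pt g x -> continuity_pt h x -> g x < h x ->
  near x (fun y => Rmax (g y) (h y) = h y).
Proof.
  intros Hg Hh Hlt; apply (near_mono x _ _ (fun y Hy => Rmax_right _ _ (Rlt_le _ _ Hy))).
  exact (near_lt g h x Hg Hh Hlt).
Qed.

Lemma derivable_pt_lim_near (g h : R -> R) x l :
  near x (fun y => g y = h y) -> derivable_pt_lim g x l -> derivable_pt_lim h x l.
Proof.
  intros [d [Hd E]]; apply (derivable_pt_lim_locally_ext g h x (x - d) (x + d)); [lra|].
  intros z Hz; apply E, Rabs_def1; lra.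
Qed.

Lemma critical_pt_near (g h : R -> R) x y :
  near x (fun z => g z = h z) -> critical_pt g x y -> critical_pt h x y.
Proof.
  intros E [Ey Hcrit].
  assert (E' : near x (fun z => h z = g z)) by (apply (near_mono x _ _ (fun z H => eq_sym H) E)).
  split; [rewrite Ey; exact (near_at _ _ E)|].
  destruct Hcrit as [Hnd | H0]; [left | right].
  - intros [l Hl]; apply Hnd; exists l; exact (derivable_pt_lim_near h g x l E' Hl).
  - exact (derivable_pt_lim_near g h x 0 E H0).
Qed.

Lemma critical_pt_of_global_min (g : R -> R) x0 :
  (forall z, g x0 <= g z) -> critical_pt g x0 (g x0).
Proof.
  intros Hmin; split; [reflexivity|].
  destruct (classic (exists l, derivable_pt_lim g x0 l)) as [[l Hl] | Hnd]; [right | now left].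
  rewrite <- (deriv_minimum g (x0 - 1) (x0 + 1) x0 (exist _ l Hl));
    [exact Hl | lra | lra | intros; apply Hmin].
Qed.

Section MinRange.

Variables (f : nat -> R -> R) (a : nat).

Lemma min_range_le n x i : (a <= i <= a + n)%nat -> min_range f a n x <= f i x.
Proof.
  induction n as [|n IH]; intros Hi; simpl.
  - replace i with a by lia; apply Rle_refl.
  - destruct (Nat.eq_dec i (a + S n)) as [->|Hne]; [apply Rmin_r|].
    eapply Rle_trans; [apply Rmin_l | apply IH; lia].
Qed.

Lemma min_range_attained n x :
  exists i, (a <= i <= a + n)%nat /\ min_range f a n x = f i x.
Proof.
  induction n as [|n IH]; simpl.
  - exists a; split; [lia | reflexivity].
  - destruct IH as [i [Hi Ei]]; unfold Rmin; destruct Rle_dec.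
    + exists i; split; [lia | exact Ei].
    + exists (a + S n)%nat; split; [lia | reflexivity].
Qed.

Lemma min_range_strict_or_tie n x :
  (exists k, (a <= k <= a + n)%nat /\ min_range f a n x = f k x /\
     forall i, (a <= i <= a + n)%nat -> i <> k -> f k x < f i x) \/
  (exists i j, (a <= i)%nat /\ (i < j)%nat /\ (j <= a + n)%nat /\
     f i x = min_range f a n x /\ f j x = min_range f a n x).
Proof.
  destruct (min_range_attained n x) as [k [Hk Ek]].
  destruct (classic (exists i, (a <= i <= a + n)%nat /\ i <> k /\ f i x = f k x))
    as [[i [Hi [Hik Ei]]] | Hstrict].
  - right; destruct (Nat.lt_ge_cases i k); [exists i, k | exists k, i];
      repeat split; lia || congruence.
  - left; exists k; split; [exact Hk | split; [exact Ek |]].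
    intros i Hi Hik; rewrite <- Ek.
    destruct (Rle_lt_or_eq_dec _ _ (min_range_le n x i Hi)) as [Hlt | Heq]; [exact Hlt|].
    exfalso; apply Hstrict; exists i; split; [exact Hi | split; [exact Hik | congruence]].
Qed.

Lemma continuity_pt_min_range n x :
  (forall i, (a <= i <= a + n)%nat -> continuity_pt (f i) x) ->
  continuity_pt (min_range f a n) x.
Proof.
  induction n as [|n IH]; intros Hc; simpl.
  - apply Hc; lia.
  - apply continuity_pt_Rmin; [apply IH; intros i Hi | ]; apply Hc; lia.
Qed.

Lemma near_min_range_eq n x k :
  (forall i, (a <= i <= a + n)%nat -> continuity_pt (f i) x) ->
  (a <= k <= a + n)%nat ->
  (forall i, (a <= i <= a + n)%nat -> i <> k -> f k x < f i x) ->
  near x (fun y => min_range f a n y = f k y).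
Proof.
  induction n as [|n IH]; intros Hc Hk Hstrict; simpl.
  - exists 1; split; [lra|]; intros y _; replace k with a by lia; reflexivity.
  - assert (Hc' : forall i, (a <= i <= a + n)%nat -> continuity_pt (f i) x)
      by (intros i Hi; apply Hc; lia).
    destruct (Nat.eq_dec k (a + S n)) as [->|Hne].
    + assert (Hlt : f (a + S n)%nat x < min_range f a n x).
      { destruct (min_range_attained n x) as [i [Hi ->]]; apply Hstrict; lia. }
      apply (near_mono x _ _ (fun y Hy => Rmin_right _ _ (Rlt_le _ _ Hy))).
      apply near_lt; [apply Hc; lia | apply continuity_pt_min_range; exact Hc' | exact Hlt].
    + apply (near_mono x (fun y => min_range f a n y = f k y /\ f k y < f (a + S n)%nat y)).
      { intros y [Ey Hy]; rewrite Ey; apply Rmin_left, Rlt_le, Hy. }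
      apply near_and; [apply IH; auto; [lia | intros i Hi; apply Hstrict; lia] |].
      apply near_lt; [apply Hc; lia | apply Hc; lia | apply Hstrict; lia].
Qed.

End MinRange.

Lemma Psi_of_near_min_range N f a n (v : R -> R) x y :
  (1 <= a)%nat -> (a + n <= 2 * N + 2)%nat ->
  (forall i, (a <= i <= a + n)%nat -> continuity_pt (f i) x) ->
  near x (fun z => v z = min_range f a n z) ->
  critical_pt v x y -> Psi f N x y.
Proof.
  intros Ha Han Hc Ev Hcrit.
  assert (Ey : y = min_range f a n x) by (rewrite (proj1 Hcrit); exact (near_at _ _ Ev)).
  destruct (min_range_strict_or_tie f a n x) as [[k [Hk [_ Hstrict]]] | [i [j [Hi [Hij [Hj [Ei Ej]]]]]]].
  - left; exists k; split; [lia|].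
    apply (critical_pt_near v); [| exact Hcrit].
    apply (near_mono x (fun z => v z = min_range f a n z /\ min_range f a n z = f k z));
      [intros z [E1 E2]; congruence |].
    exact (near_and _ _ _ Ev (near_min_range_eq f a n x k Hc Hk Hstrict)).
  - right; exists i, j; repeat split; [lia | lia | lia | congruence | congruence].
Qed.

Lemma critical_pt_max_min_range_Psi N f :
  (forall i, (1 <= i <= 2 * N + 2)%nat -> continuity (f i)) ->
  forall x y,
    critical_pt (fun z => Rmax (min_range f 1 N z) (min_range f (N + 2) N z)) x y ->
    Psi f N x y.
Proof.
  intros Hc x y Hcrit.
  assert (Hc1 : forall i, (1 <= i <= 1 + N)%nat -> continuity_pt (f i) x)
    by (intros i Hi; apply Hc; lia).
  assert (Hc2 : forall i, (N + 2 <= i <= N + 2 + N)%nat -> continuity_pt (f i) x)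
    by (intros i Hi; apply Hc; lia).
  pose proof (continuity_pt_min_range f 1 N x Hc1) as Hv1.
  pose proof (continuity_pt_min_range f (N + 2) N x Hc2) as Hv2.
  destruct (total_order_T (min_range f 1 N x) (min_range f (N + 2) N x)) as [[Hlt | Heq] | Hgt].
  - refine (Psi_of_near_min_range N f (N + 2) N _ x y _ _ Hc2 _ Hcrit); [lia | lia |].
    exact (near_Rmax_r _ _ x Hv1 Hv2 Hlt).
  - right.
    destruct (min_range_attained f 1 N x) as [i [Hi Ei]].
    destruct (min_range_attained f (N + 2) N x) as [j [Hj Ej]].
    exists i, j; split; [lia | split; [lia | split; [lia | split]]].
    + rewrite (proj1 Hcrit), <- Ei, Rmax_left; [reflexivity | rewrite Heq; apply Rle_refl].
    + congruence.
  - refine (Psi_of_near_min_range N f 1 N _ x y _ _ Hc1 _ Hcrit); [lia | lia |].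
    exact (near_Rmax_l _ _ x Hv1 Hv2 Hgt).
Qed.

Theorem corollary1 (N : nat) (f : nat -> R -> R)
  (HN : (1 <= N)%nat)
  (Hcont : forall i, (1 <= i <= 2 * N + 2)%nat -> continuity (f i))
  (Hconv : forall i, (1 <= i <= 2 * N + 2)%nat -> convex_fun (f i)) :
  let v1 := min_range f 1 N in
  let v2 := min_range f (N + 2) N in
  let v := fun x => Rmax (v1 x) (v2 x) in
  (forall x y, critical_pt v x y -> Psi f N x y) /\
  ((exists x0, forall x, v x0 <= v x) ->
   exists xs,
     (exists y, Psi f N xs y /\ v xs = y) /\
     (forall x y, Psi f N x y -> v x = y -> v xs <= v x) /\
     (forall z, v xs <= v z)).
Proof.
  intros v1 v2 v.
  pose proof (critical_pt_max_min_range_Psi N f Hcont) as Hcrit.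
  split; [exact Hcrit|].
  intros [x0 Hmin]; exists x0; split; [|split; [intros; apply Hmin | exact Hmin]].
  exists (v x0); split; [apply Hcrit, critical_pt_of_global_min, Hmin | reflexivity].
Qed.
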